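(* For any real numbers $0<\gamma\le L$ and any integer $n\ge 1$, there exist a domain $\mathcal{X}\times\mathcal{Y}$, a distribution $P$ supported on a set $\mathcal{Z}\subset\mathcal{X}\times\mathcal{Y}$, a loss function $\ell:\mathcal{Y}\times\mathcal{Y}\to[0,L]$ (i.e. non-negative and $L$-bounded), and a uniformly $\gamma$-stable learning algorithm $\mathcal{A}:\mathcal{Z}^n\to\mathcal{Y}^{\mathcal{X}}$, such that if $\mathcal{S}$ is a training set of $n$ i.i.d. samples from $P$, then with probability at least $3/64$ over the draw of $\mathcal{S}$, \[ R_{\rm pop}(\mathcal{A}_\mathcal{S})-R_{\rm emp}(\mathcal{A}_\mathcal{S})\ge \frac{\gamma}{4}+\frac{L}{32\sqrt{n}}. \]
   Context: A learning algorithm $\mathcal{A}$ is a (deterministic) map sending a training set $\mathcal{S}=\{(x_1,y_1),\ldots,(x_n,y_n)\}$ to a function $\mathcal{A}_\mathcal{S}:\mathcal{X}\to\mathcal{Y}$. For a non-negative loss $\ell:\mathcal{Y}\times\mathcal{Y}\to\mathbb{R}$ and data distribution $P$ on $\mathcal{X}\times\mathcal{Y}$, the population risk is $R_{\rm pop}(\mathcal{A}_\mathcal{S})=\mathbb{E}_{(x,y)\sim P}[\ell(\mathcal{A}_\mathcal{S}(x),y)]$ and the empirical risk is $R_{\rm emp}(\mathcal{A}_\mathcal{S})=\frac1n\sum_{i=1}^n \ell(\mathcal{A}_\mathcal{S}(x_i),y_i)$. The algorithm $\mathcal{A}$ is uniformly $\gamma$-stable if for every training set $\mathcal{S}=\{(x_1,y_1),\ldots,(x_n,y_n)\}$,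 every index $i$, every training set $\mathcal{S}^i$ obtained from $\mathcal{S}$ by replacing $(x_i,y_i)$ with an arbitrary $(x_i',y_i')$, and every $(x,y)\in\mathcal{X}\times\mathcal{Y}$, one has $|\ell(\mathcal{A}_\mathcal{S}(x),y)-\ell(\mathcal{A}_{\mathcal{S}^i}(x),y)|\le\gamma$. *)

From mathcomp Require Import all_boot all_order all_algebra.
From mathcomp Require Import reals.
Set Implicit Arguments. Unset Strict Implicit. Unset Printing Implicit Defensive.
Import Order.TTheory GRing.Theory Num.Theory.
Local Open Scope ring_scope.

Section Defs.
Variables (R : realType) (X Y : finType).

Definition trainset (n : nat) := {ffun 'I_n -> (X * Y)%type}.

Definition algorithm (n : nat) := trainset n -> X -> Y.

Definition is_distr (P : X * Y -> R) : Prop :=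
  (forall z, 0 <= P z) /\ \sum_(z : X * Y) P z = 1.

Definition pop_risk (P : X * Y -> R) (loss : Y -> Y -> R) (h : X -> Y) : R :=
  \sum_(z : X * Y) P z * loss (h z.1) z.2.

Definition emp_risk (n : nat) (loss : Y -> Y -> R) (h : X -> Y) (S : trainset n) : R :=
  n%:R^-1 * \sum_(i < n) loss (h (S i).1) (S i).2.

Definition replace_at (n : nat) (S : trainset n) (i : 'I_n) (z' : X * Y) : trainset n :=
  [ffun j => if j == i then z' else S j].

Definition uniformly_stable (n : nat) (gamma : R) (loss : Y -> Y -> R) (A : algorithm n) : Prop :=
  forall (S : trainset n) (i : 'I_n) (z' : X * Y) (x : X) (y : Y),
    `| loss (A S x) y - loss (A (replace_at S i z') x) y | <= gamma.

Definition prob_iid (n : nat) (P : X * Y -> R) (E : trainset n -> bool) : R :=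
  \sum_(S : trainset n | E S) \prod_(i < n) P (S i).
End Defs.

(* Fix 0 < gamma <= L and n >= 1.  Take X = {0,...,2n-1}, Y = bool, P uniform
   on X * Y, and the loss  loss p y = (y ? L : gamma/2) - (p ? gamma/2 : 0).
   Changing a boolean prediction moves this loss by gamma/2, so EVERY algorithm
   with boolean outputs is uniformly gamma-stable.  The algorithm "memorizer"
   predicts true exactly on the training inputs.  Its empirical risk is
   C (L - gamma/2) / n, where C counts the positive labels of the sample, while
   it predicts true on at most half of X, so its population risk is >= L/2.
   Hence the gap is >= gamma/4 + L/(32 sqrt n) as soon as 2C + r + 1 <= n,
   where r ~ sqrt n / 8.  Since C is Binomial(n, 1/2), an anti-concentration
   bound (via the central binomial estimate C(n, n/2)^2 (3n+2) <= 2 4^n)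
   shows that this event has probability at least 3/64. *)
From mathcomp Require Import all_boot all_order all_algebra.
From mathcomp Require Import reals.
From mathcomp Require Import zify ring lra.
Import Order.TTheory GRing.Theory Num.Theory.
Set Implicit Arguments. Unset Strict Implicit. Unset Printing Implicit Defensive.

Lemma binom_odd_middle m : 'C(m.*2.+1, m.+1) = 'C(m.*2.+1, m).
Proof.
have le_m : m.+1 <= m.*2.+1 by lia.
by rewrite -(bin_sub le_m) (_ : m.*2.+1 - m.+1 = m) //; lia.
Qed.

Lemma central_binom_succ m :
  'C((m.+1).*2, m.+1) * m.+1 = 2 * (m.*2.+1) * 'C(m.*2, m).
Proof.
have h1 := mul_bin_diag (m.+1).*2 m.
have h2 := mul_bin_diag (m.*2.+1) m.
rewrite doubleS /= in h1 *; rewrite /= binom_odd_middle in h2.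
nia.
Qed.

Lemma central_binom_sq_bound m : 'C(m.*2, m) ^ 2 * (3 * m + 1) <= 16 ^ m.
Proof.
elim: m => [|m IH]; first by rewrite bin0.
have succ := central_binom_succ m.
set c := 'C(m.*2, m) in succ IH *.
set d := 'C((m.+1).*2, m.+1) in succ *.
have step : d ^ 2 * (3 * m.+1 + 1) * m.+1 ^ 2 <= 16 * 16 ^ m * m.+1 ^ 2.
  have -> : d ^ 2 * (3 * m.+1 + 1) * m.+1 ^ 2
            = 4 * (m.*2.+1) ^ 2 * (3 * m + 4) * c ^ 2.
    have succ_sq : (d * m.+1) ^ 2 = (2 * (m.*2.+1) * c) ^ 2 by rewrite succ.
    rewrite !expnMn in succ_sq; nia.
  have ratio : (m.*2.+1) ^ 2 * (3 * m + 4) <= 4 * m.+1 ^ 2 * (3 * m + 1) by nia.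
  nia.
by rewrite leq_pmul2r ?expn_gt0 // -expnS in step.
Qed.

Lemma middle_binom_sq_bound n : 'C(n, n./2) ^ 2 * (3 * n + 2) <= 2 * 4 ^ n.
Proof.
rewrite -[n in 'C(n, _)](odd_double_half n) -[n in 3 * n](odd_double_half n)
  -[n in 4 ^ n](odd_double_half n).
set m := n./2; case: (odd n); rewrite ?add1n ?add0n.
- have h := central_binom_sq_bound m.+1.
  have e : 'C(m.+1.*2, m.+1) = 2 * 'C(m.*2.+1, m).
    by rewrite doubleS binS binom_odd_middle; lia.
  rewrite e [16 ^ m.+1]expnS in h.
  have -> : 4 ^ (m.*2.+1) = 4 * 16 ^ m by rewrite expnS -mul2n expnM.
  set c := 'C(m.*2.+1, m) in h *; rewrite -!mul2n in h *; nia.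
- have h := central_binom_sq_bound m.
  have -> : 4 ^ (m.*2) = 16 ^ m by rewrite -mul2n expnM.
  set c := 'C(m.*2, m) in h *; rewrite -!mul2n in h *; nia.
Qed.

Lemma binom_increasing n k j : j <= n./2 -> k <= j -> 'C(n, k) <= 'C(n, j).
Proof.
elim: j => [|j IH] hj hk; first by rewrite leqn0 in hk; rewrite (eqP hk).
rewrite leq_eqVlt in hk; case/orP: hk => [/eqP -> //|hk].
apply: leq_trans (IH _ hk) _; first by lia.
have h := mul_bin_left n j.
have h2 : j.+1 <= n - j by have := odd_double_half n; lia.
nia.
Qed.

Lemma binom_le_middle n k : 'C(n, k) <= 'C(n, n./2).
Proof.
case: (leqP k n./2) => hk; first exact: binom_increasing.
case: (leqP k n) => hn; last by rewrite bin_small.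
rewrite -bin_sub //; apply: binom_increasing => //.
have := odd_double_half n; lia.
Qed.

Lemma sum_binom n : \sum_(k < n.+1) 'C(n, k) = 2 ^ n.
Proof.
have := expnDn 1 1 n; rewrite (_ : 1 + 1 = 2) // => ->.
by apply: eq_bigr => i _; rewrite !exp1n !muln1.
Qed.

Lemma card_window n r :
  #|[pred k : 'I_n.+1 | (2 * k < n) && (n <= 2 * k + r)]| <= r.
Proof.
pose g (j : 'I_r) : 'I_n.+1 := inord ((n - 1 - j)./2).
apply: (@leq_trans #|g @: setT|); last first.
  by rewrite (leq_trans (leq_imset_card _ _)) // cardsT card_ord.
apply/subset_leq_card/subsetP => k; rewrite inE => /andP [h1 h2].
have hj : n - 1 - 2 * k < r by lia.
apply/imsetP; exists (Ordinal hj) => //.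
have e : n - 1 - (n - 1 - 2 * k) = k.*2 by rewrite -mul2n; lia.
by apply: val_inj; rewrite /g /= e doubleK inordK.
Qed.

Section BinomialLowerTail.
Variable n : nat.

Let lower_half := \sum_(k < n.+1 | 2 * k < n) 'C(n, k).
Let middle := 'C(n, n./2).
Let lower_tail r := \sum_(k < n.+1 | 2 * k + r + 1 <= n) 'C(n, k).

(* By symmetry the row sum 2^n is at most two lower halves plus the middle. *)
Lemma binom_row_le_halves : 2 ^ n <= 2 * lower_half + middle.
Proof.
have upper : \sum_(k < n.+1 | n < 2 * k) 'C(n, k) = lower_half.
  rewrite (reindex_inj rev_ord_inj) /=.
  apply: eq_big => k /=; first by have := ltn_ord k; lia.
  by move=> _; rewrite bin_sub //; have := ltn_ord k; lia.
have center : \sum_(k < n.+1 | 2 * k == n) 'C(n, k) <= middle.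
  have half_lt : n./2 < n.+1 by have := odd_double_half n; lia.
  apply: (@leq_trans (\sum_(k < n.+1 | k == inord n./2) 'C(n, k))).
    rewrite big_mkcond [X in _ <= X]big_mkcond /=.
    apply: leq_sum => k _; case: ifP => // /eqP hk.
    by rewrite ifT //; apply/eqP/val_inj; rewrite /= inordK //; lia.
  by rewrite big_pred1_eq inordK.
rewrite -sum_binom (bigID (fun k : 'I_n.+1 => 2 * k < n)) /= -/lower_half.
rewrite [X in _ + X](bigID (fun k : 'I_n.+1 => n < 2 * k)) /=.
have above : \sum_(k < n.+1 | ~~ (2 * k < n) && (n < 2 * k)) 'C(n, k) = lower_half.
  by rewrite -upper; apply: eq_bigl => k; lia.
have at_mean : \sum_(k < n.+1 | ~~ (2 * k < n) && ~~ (n < 2 * k)) 'C(n, k)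
               = \sum_(k < n.+1 | 2 * k == n) 'C(n, k).
  by apply: eq_bigl => k; lia.
rewrite above at_mean; lia.
Qed.

Lemma lower_half_le_tail r : lower_half <= lower_tail r + r * middle.
Proof.
rewrite /lower_half (bigID (fun k : 'I_n.+1 => 2 * k + r + 1 <= n)) /=.
apply: leq_add.
  rewrite /lower_tail big_mkcond [X in _ <= X]big_mkcond /=.
  by apply: leq_sum => k _; case: ifP => // /andP [_ ->].
apply: (@leq_trans (\sum_(k < n.+1 | (2 * k < n) && (n <= 2 * k + r)) middle)).
  rewrite big_mkcond [X in _ <= X]big_mkcond /=.
  apply: leq_sum => k _; case: ifP => // h.
  by rewrite ifT; [exact: binom_le_middle | lia].
by rewrite sum_nat_const leq_mul2r card_window orbT.
Qed.

(* Anti-concentration: Binomial(n, 1/2) falls r + 1 below n/2 with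
   probability at least 3/64 as long as 64 r^2 <= n. *)
Lemma binom_lower_tail r : 0 < n -> 64 * r ^ 2 <= n ->
  3 * 2 ^ n <= 64 * lower_tail r.
Proof.
move=> n_gt0 hr.
have halves := binom_row_le_halves.
have tail := lower_half_le_tail r.
have mid_small : 32 * ((2 * r + 1) * middle) <= 29 * 2 ^ n.
  rewrite -leq_sqr.
  have c2 := middle_binom_sq_bound n.
  have hr2 : 2048 * (2 * r + 1) ^ 2 <= 841 * (3 * n + 2) by nia.
  suff : (32 * ((2 * r + 1) * middle)) ^ 2 * (3 * n + 2)
         <= (29 * 2 ^ n) ^ 2 * (3 * n + 2) by rewrite leq_pmul2r; last lia.
  have e4 : (2 ^ n) ^ 2 = 4 ^ n by rewrite -expnM mulnC expnM.
  rewrite !expnMn e4; nia.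
nia.
Qed.

End BinomialLowerTail.

Lemma count_sets_by_size n (G : nat -> bool) :
  \sum_(A : {set 'I_n} | G #|A|) 1 = \sum_(k < n.+1 | G k) 'C(n, k).
Proof.
have card_lt (A : {set 'I_n}) : #|A| < n.+1.
  by rewrite ltnS (leq_trans (max_card A)) ?card_ord.
rewrite (partition_big (fun A : {set 'I_n} => (inord #|A| : 'I_n.+1))
                       (fun k : 'I_n.+1 => G k)) /=; last first.
  by move=> A hA; rewrite inordK.
apply: eq_bigr => k hk.
rewrite -[n in 'C(n, _)](card_ord n) -card_draws -sum1_card.
apply: eq_bigl => A; rewrite inE; apply/idP/idP.
  by case/andP => _ /eqP <-; rewrite inordK.
move/eqP => hA; rewrite hA hk /=; apply/eqP/val_inj; rewrite /= inordK //.
Qed.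

(* Counting labelled samples of size n by their number of positive labels:
   the inputs are free and the set of positive positions has a given size. *)
Lemma count_samples_by_positives (X : finType) n (G : nat -> bool) :
  \sum_(S : {ffun 'I_n -> X * bool} | G #|[set i | (S i).2]|) 1
    = #|X| ^ n * \sum_(k < n.+1 | G k) 'C(n, k).
Proof.
pose join (p : {ffun 'I_n -> X} * {set 'I_n}) := [ffun i => (p.1 i, i \in p.2)].
pose split (S : {ffun 'I_n -> X * bool}) := ([ffun i => (S i).1], [set i | (S i).2]).
have positives_join p : [set i | (join p i).2] = p.2.
  by apply/setP => i; rewrite inE ffunE.
rewrite (reindex join); last first.
  exists split => [[f A] _ | S _]; last first.
    by apply/ffunP => i; rewrite /join /split !ffunE /= inE; case: (S i).
  by congr pair; [apply/ffunP => i; rewrite !ffunE | exact: positives_join].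
transitivity (\sum_(p : {ffun 'I_n -> X} * {set 'I_n} | true && G #|p.2|) 1).
  by apply: eq_bigl => p; rewrite positives_join.
rewrite -(pair_big_dep xpredT (fun _ (A : {set 'I_n}) => G #|A|) (fun _ _ => 1)) /=.
by rewrite sum_nat_const count_sets_by_size card_ffun card_ord.
Qed.

Lemma exists_scaled_isqrt n : exists r, 64 * r ^ 2 <= n < 64 * r.+1 ^ 2.
Proof.
elim: n => [|n [r hr]]; first by exists 0.
case: (ltnP n.+1 (64 * r.+1 ^ 2)) => h; [exists r | exists r.+1]; lia.
Qed.

Local Open Scope ring_scope.

Section IidSamples.
Variables (R : realType) (X Y : finType) (n : nat).

Definition uniform_distr : X * Y -> R := fun _ => #|{: X * Y}|%:R^-1.

Lemma uniform_is_distr : (0 < #|{: X * Y}|)%N -> is_distr uniform_distr.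
Proof.
move=> card_gt0; split => [z | ]; first by rewrite invr_ge0 ler0n.
by rewrite /uniform_distr sumr_const -[LHS]mulr_natr mulVf // pnatr_eq0 -lt0n.
Qed.

Lemma prob_iid_mono (P : X * Y -> R) (E F : trainset X Y n -> bool) :
  (forall z, 0 <= P z) -> (forall S, F S -> E S) -> prob_iid P F <= prob_iid P E.
Proof.
move=> P_ge0 FE; rewrite /prob_iid big_mkcond [X in _ <= X]big_mkcond /=.
apply: ler_sum => S _; case: ifP => [/FE -> // | _].
by case: ifP => // _; apply: prodr_ge0.
Qed.

Lemma prob_iid_const (c : R) (E : trainset X Y n -> bool) :
  prob_iid (fun _ => c) E = (\sum_(S : trainset X Y n | E S) 1)%N%:R * c ^+ n.
Proof.
rewrite /prob_iid natr_sum mulr_suml; apply: eq_bigr => S _.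
by rewrite prodr_const card_ord mul1r.
Qed.

End IidSamples.
Arguments uniform_distr R X Y : clear implicits.

Lemma card_pairs_bool (X : finType) : #|{: X * bool}| = (#|X| * 2)%N.
Proof. by rewrite card_prod card_bool. Qed.

(* For a uniform sample with boolean labels, fewer than (n - r)/2 labels are
   positive with probability at least 3/64, provided 64 r^2 <= n: the
   probability is #|X|^n tail / (2 #|X|)^n = tail / 2^n. *)

Lemma prob_few_positives (R : realType) (X : finType) n r :
  (0 < #|X|)%N -> (0 < n)%N -> (64 * r ^ 2 <= n)%N ->
  3 / 64 <= prob_iid (uniform_distr R X bool)
              (fun S : trainset X bool n => 2 * #|[set i | (S i).2]| + r + 1 <= n)%N.
Proof.
move=> X_gt0 n_gt0 hr.
rewrite prob_iid_const (count_samples_by_positives X n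
          (fun k => 2 * k + r + 1 <= n)%N).
have := binom_lower_tail n_gt0 hr.
move: (\sum_(k < n.+1 | _) 'C(n, k))%N => tail.
rewrite -(ler_nat R) !natrM natrX => tail_ge.
have half : #|X|%:R * #|{: X * bool}|%:R^-1 = 2^-1 :> R.
  have X_neq0 : #|X|%:R != 0 :> R by rewrite pnatr_eq0 -lt0n.
  by rewrite card_pairs_bool natrM; field.
rewrite natrX mulrAC -exprMn half exprVn.
have pow_gt0 : (0 : R) < 2 ^+ n by apply: exprn_gt0.
by rewrite [X in _ <= X]mulrC ler_pdivlMr //; lra.
Qed.

Section HardInstance.
Variables (R : realType) (gamma L : R).

Definition hard_loss (p y : bool) : R :=
  (if y then L else gamma / 2) - (if p then gamma / 2 else 0).

Lemma hard_loss_bounded p y : 0 <= gamma <= L -> 0 <= hard_loss p y <= L.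
Proof.
move=> /andP [gamma_ge0 gamma_le_L].
by rewrite /hard_loss; case: p; case: y; apply/andP; split; lra.
Qed.

(* Flipping a prediction changes the loss by gamma/2, so any algorithm with
   boolean outputs is uniformly gamma-stable. *)
Lemma hard_loss_stable (X : finType) n (A : algorithm X bool n) :
  0 <= gamma -> uniformly_stable gamma hard_loss A.
Proof.
move=> gamma_ge0 S i z x y; rewrite /hard_loss.
by case: (A S x); case: (A _ x); case: y; rewrite ler_norml; apply/andP; split; lra.
Qed.

Lemma pop_risk_ge_half (X : finType) (h : X -> bool) :
  0 <= gamma -> (0 < #|X|)%N -> (2 * #|[set x | h x]| <= #|X|)%N ->
  L / 2 <= pop_risk (uniform_distr R X bool) hard_loss h.
Proof.
move=> gamma_ge0 X_gt0 few_true.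
rewrite /pop_risk /uniform_distr; set u : R := #|{: X * bool}|%:R^-1.
have u_def : u = (2 * #|X|%:R)^-1 by rewrite /u card_pairs_bool natrM mulrC.
have per_input (c : R) x : c * hard_loss (h x) true + c * hard_loss (h x) false
                           = c * (L + gamma / 2) - (if h x then c * gamma else 0).
  by rewrite /hard_loss; case: (h x) => /=; field.
rewrite -(pair_bigA _ (fun x y => u * hard_loss (h x) y)) /=.
under eq_bigr => x _ do rewrite big_bool /= per_input.
rewrite sumrB sumr_const -big_mkcond /=.
rewrite (eq_bigl (fun x => x \in [set x | h x])); last by move=> x; rewrite inE.
rewrite sumr_const -[_ *+ #|X|]mulr_natr -[_ *+ #|_|]mulr_natr u_def.
move: few_true; rewrite -(ler_nat R) natrM => few_true.
have X_pos : (0 : R) < #|X|%:R by rewrite ltr0n.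
rewrite -subr_ge0.
have -> : (2 * #|X|%:R)^-1 * (L + gamma / 2) * #|X|%:R
          - (2 * #|X|%:R)^-1 * gamma * #|[set x | h x]|%:R - L / 2
          = gamma * (#|X|%:R - 2 * #|[set x | h x]|%:R) / (4 * #|X|%:R).
  by field; rewrite pnatr_eq0 -lt0n.
by apply: divr_ge0; nra.
Qed.

Lemma emp_risk_interpolating (X : finType) n (h : X -> bool) (S : trainset X bool n) :
  (forall i, h (S i).1) ->
  emp_risk hard_loss h S = #|[set i | (S i).2]|%:R * (L - gamma / 2) / n%:R.
Proof.
move=> fits; rewrite /emp_risk mulrC; congr (_ * _).
under eq_bigr => i _ do rewrite fits.
rewrite (eq_bigr (fun i => if (S i).2 then L - gamma / 2 else 0)); last first.
  by move=> i _; rewrite /hard_loss; case: (S i).2; ring.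
rewrite -big_mkcond /= (eq_bigl (fun i => i \in [set i | (S i).2])); last first.
  by move=> i; rewrite inE.
by rewrite sumr_const mulr_natl.
Qed.

(* The arithmetic core: if the population risk is at least L/2 and at most
   (N - r - 1)/2 of N <= 64 (r + 1)^2 labels are positive, then the gap is
   at least gamma/4 + L/(32 sqrt N), because sqrt N <= 8 (r + 1). *)
Lemma gap_bound (N C r p : R) : 0 < gamma -> gamma <= L ->
  0 < N -> 0 <= C -> 0 <= r -> 2 * C + r + 1 <= N -> N <= 64 * (r + 1) ^+ 2 ->
  L / 2 <= p -> gamma / 4 + L / (32 * Num.sqrt N) <= p - C * (L - gamma / 2) / N.
Proof.
move=> gamma_gt0 gamma_le_L N_gt0 C_ge0 r_ge0 few_pos N_small p_ge.
set s := Num.sqrt N.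
have s_gt0 : 0 < s by rewrite sqrtr_gt0.
have s_sq : s * s = N by rewrite -expr2 sqr_sqrtr // ltW.
have s_le : s <= 8 * (r + 1) by nra.
apply: le_trans (_ : L / 2 - C * (L - gamma / 2) / N <= _); last lra.
rewrite -subr_ge0.
have -> : L / 2 - C * (L - gamma / 2) / N - (gamma / 4 + L / (32 * s))
          = ((16 * L - 8 * gamma) * (N - 2 * C - s / 8) + (L - gamma) * s) / (32 * N).
  by rewrite -s_sq; field; lra.
by apply: divr_ge0; nra.
Qed.

End HardInstance.

Definition memorizer (X : finType) n : algorithm X bool n :=
  fun S x => x \in [set (S i).1 | i : 'I_n].

Lemma memorizer_fits (X : finType) n (S : trainset X bool n) i :
  memorizer S (S i).1.
Proof. by apply/imsetP; exists i. Qed.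

Lemma memorizer_support (X : finType) n (S : trainset X bool n) :
  (#|[set x | memorizer S x]| <= n)%N.
Proof.
rewrite (_ : [set x | _] = [set (S i).1 | i : 'I_n]); last by apply/setP => x; rewrite inE.
by rewrite (leq_trans (leq_imset_card _ _)) ?card_ord.
Qed.

Theorem theorem2 (R : realType) (gamma L : R) (n : nat) :
  0 < gamma -> gamma <= L -> (1 <= n)%N ->
  exists (X Y : finType) (P : X * Y -> R) (loss : Y -> Y -> R) (A : algorithm X Y n),
    is_distr P /\
    (forall y1 y2 : Y, 0 <= loss y1 y2 <= L) /\
    uniformly_stable gamma loss A /\
    prob_iid P (fun S : trainset X Y n =>
        gamma / 4 + L / (32 * Num.sqrt (n%:R)) <=
        pop_risk P loss (A S) - emp_risk loss (A S) S)
    >= 3 / 64.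
Proof.
move=> gamma_gt0 gamma_le_L n_gt0.
have X_gt0 : (0 < #|'I_(n.*2)|)%N by rewrite card_ord double_gt0.
have [r /andP [r_lo r_hi]] := exists_scaled_isqrt n.
exists 'I_(n.*2), bool, (uniform_distr R 'I_(n.*2) bool), (hard_loss gamma L),
  (@memorizer 'I_(n.*2) n).
split; first by apply: uniform_is_distr; rewrite card_pairs_bool muln_gt0 X_gt0.
have gamma_ge0 := ltW gamma_gt0.
split; first by move=> p y; apply: hard_loss_bounded; rewrite gamma_ge0.
split; first exact: hard_loss_stable.
apply: le_trans (prob_few_positives R X_gt0 n_gt0 r_lo) (prob_iid_mono _ _).
  by move=> z; rewrite invr_ge0 ler0n.
move=> S few_pos.
rewrite (emp_risk_interpolating _ _ (memorizer_fits S)).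
apply: (gap_bound (r := r%:R)) => //; rewrite ?ltr0n ?ler0n //.
- by move: few_pos; rewrite -(ler_nat R) 2!natrD natrM.
- by move/ltnW: r_hi; rewrite -(ler_nat R) natrM natrX -[r.+1]addn1 natrD.
- apply: pop_risk_ge_half => //.
  apply: (@leq_trans n.*2); last by rewrite card_ord.
  by rewrite mul2n leq_double memorizer_support.
Qed.
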